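(* Let $S$ be an $E$-demigroup. If the constellation $C^d_E(S)$ is inductive, then $E$ is right pre-reduced and: (I1) for all $t\in S$ and $e\in E$ there is $t\cdot e\in E$ such that for all $s\in S$: ($ste=st$ and $sd(t)=s$) if and only if $s(t\cdot e)=s$; and (I2) $(E,\le_r)$ is a meet-semilattice, and for all $s\in S$ and $e,f\in E$, $se=sf=s$ implies $s(e\wedge f)=s$, where $\wedge$ is the meet in $(E,\le_r)$. That is, $S$ is an inductive $E$-demigroup.
   Context: For a semigroup $S$, $E(S)$ is its set of idempotents; for $e,f\in E(S)$, $e\le_r f$ iff $e=ef$. $E\subseteq E(S)$ is right pre-reduced if $e=ef$ and $f=fe$ imply $e=f$ for $e,f\in E$. A demigroup is a semigroup $S$ with a unary operation $d$ such that for all $x,y\in S$: $d(x)\in E(S)$, $d(x)x=x$ and $d(xy)=d(xd(y))$. For $E\subseteq E(S)$, $S$ is an $E$-demigroup if $d(s)\in E$ for all $s\in S$ and $ed(e)=e$ for all $e\in E$. An $E$-demigroup is inductive if $E$ is right pre-reduced and there is a function $\cdot:S\times E\to E$ satisfying (I1) and (I2). $C_E(S)=\{(e,s)\in E\times S\mid es=s\}$ with partial product $(e,s)\circ(f,t)=(e,st)$ defined exactly when $sf=s$, and $D((e,s))=(e,e)$; $C^d_E(S)=\{(e,s)\in C_E(S)\mid d(e)=d(s)\}$ with the restricted operations. This is a constellation: a set $P$ with partial binary $\circ$ and unary $D$ such that (C1) if $x\circ(y\circ z)$ exists then so does $(x\circ y)\circ z$ and they are equal; (C2) if $x\circ y$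 and $y\circ z$ exist then $x\circ(y\circ z)$ exists; (C3) $D(x)$ is the unique right identity $e$ (i.e. $a\circ e=a$ whenever defined) with $e\circ x=x$. The natural quasiorder on $P$: $s\le t$ iff $D(s)\circ t$ exists and equals $s$; $P$ is normal if this is a partial order. $P$ is inductive if it is normal and (O4) for all $e\in D(P)=\{D(x)\mid x\in P\}$ and $a\in P$ there is a largest $x\in P$ (in the natural order) with $x\le a$ and $x\circ e$ defined, denoted $a|e$; and (O5) for $x,y\in P$, $e\in D(P)$, if $x\circ y$ exists then $D((x\circ y)|e)=D(x|D(y|e))$. *)

From Stdlib Require Import Classical.

Set Implicit Arguments.

Section Semigroups.
Variable S : Type.
Variable mul : S -> S -> S.
Variable d : S -> S.
Variable E : S -> Prop.

Local Infix "*" := mul.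

Definition is_semigroup : Prop := forall x y z, x * (y * z) = (x * y) * z.

Definition idempotent (e : S) : Prop := e * e = e.

Definition le_r (e f : S) : Prop := e = e * f.

Definition right_pre_reduced : Prop :=
  forall e f, E e -> E f -> e = e * f -> f = f * e -> e = f.

Definition is_demigroup : Prop :=
  is_semigroup /\
  forall x y, idempotent (d x) /\ d x * x = x /\ d (x * y) = d (x * d y).

Definition is_E_demigroup : Prop :=
  is_demigroup /\
  (forall e, E e -> idempotent e) /\
  (forall s, E (d s)) /\
  (forall e, E e -> e * d e = e).

Definition I1 (dot : S -> S -> S) : Prop :=
  forall t e, E e ->
    E (dot t e) /\
    forall s, ((s * t * e = s * t /\ s * d t = s) <-> s * dot t e = s).

Definition partial_order_on (le : S -> S -> Prop) : Prop :=
  (forall e, E e -> le e e) /\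
  (forall e f g, E e -> E f -> E g -> le e f -> le f g -> le e g) /\
  (forall e f, E e -> E f -> le e f -> le f e -> e = f).

Definition is_meet (le : S -> S -> Prop) (e f m : S) : Prop :=
  E m /\ le m e /\ le m f /\
  forall x, E x -> le x e -> le x f -> le x m.

Definition meet_semilattice (le : S -> S -> Prop) : Prop :=
  partial_order_on le /\
  forall e f, E e -> E f -> exists m, is_meet le e f m.

Definition I2 : Prop :=
  meet_semilattice le_r /\
  forall s e f m, E e -> E f -> is_meet le_r e f m ->
    s * e = s -> s * f = s -> s * m = s.

Definition inductive_E_demigroup : Prop :=
  is_E_demigroup /\ right_pre_reduced /\
  exists dot : S -> S -> S, I1 dot /\ I2.

Definition CdE (p : S * S) : Prop :=
  E (fst p) /\ fst p * snd p = snd p /\ d (fst p) = d (snd p).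

(* Partial product as a relation: CdE_comp x y z  iff  x o y is defined and equals z.
   (e,s) o (f,t) = (e, s t), defined exactly when s f = s. *)
Definition CdE_comp (x y z : S * S) : Prop :=
  snd x * fst y = snd x /\ z = (fst x, snd x * snd y).

Definition CdE_D (x : S * S) : S * S := (fst x, fst x).

End Semigroups.

(* Generic notions for a constellation (P, o, D): P is given as a carrier predicate
   inP on a type A, the partial product as a relation comp x y z :<-> "x o y exists
   and equals z", and D as a function. All quantifiers range over P. *)
Section Constellations.
Variable A : Type.
Variable inP : A -> Prop.
Variable comp : A -> A -> A -> Prop.
Variable D : A -> A.

Definition defined (x y : A) : Prop := exists z, inP z /\ comp x y z.

Definition nat_le (s t : A) : Prop := comp (D s) t s.

Definition normal : Prop :=
  (forall x, inP x -> nat_le x x) /\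
  (forall x y z, inP x -> inP y -> inP z -> nat_le x y -> nat_le y z -> nat_le x z) /\
  (forall x y, inP x -> inP y -> nat_le x y -> nat_le y x -> x = y).

Definition in_DP (e : A) : Prop := exists x, inP x /\ e = D x.

Definition is_restr (a e x : A) : Prop :=
  inP x /\ nat_le x a /\ defined x e /\
  forall y, inP y -> nat_le y a -> defined y e -> nat_le y x.

Definition O4 : Prop :=
  forall e a, in_DP e -> inP a -> exists x, is_restr a e x.

Definition O5 : Prop :=
  forall x y xy e, inP x -> inP y -> inP xy -> comp x y xy -> in_DP e ->
    forall r w u, is_restr xy e r -> is_restr y e w -> is_restr x (D w) u ->
      D r = D u.

Definition inductive_constellation : Prop := normal /\ O4 /\ O5.

End Constellations.

(* Everything is read off from restrictions in C = C^d_E(S).  An element of C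
   is a pair (e,s); (e,s) <= (f,t) in the natural order iff e f = e and
   s = e t, and (e,s) o (c,c) is defined iff s c = s.  Write (p,q)|c for the
   restriction of (p,q) to (c,c), which exists by (O4).
   - Right pre-reducedness is antisymmetry of <= on diagonal pairs (e,e).
   - The central lemma [restriction_absorbs]: if s p = s and s q c = s q, then
     s g = s, where g is the first component of (p,q)|c.  It is proved by
     applying (O5) to the product (d s, s) o (p,q) = (d s, s q).
   - (I1): t.e is the first component of (d t, t)|e.
   - (I2): the meet of e and f in (E, <=_r) is the first component of (e,e)|f;
     its absorption property is again [restriction_absorbs]. *)

From Stdlib Require Import ClassicalEpsilon.

Set Implicit Arguments.

Lemma le_restr_of_defined (A : Type) (inP : A -> Prop) (comp : A -> A -> A -> Prop)
    (D : A -> A) (a e r : A) :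
  (forall x, inP x -> nat_le comp D x x) ->
  inP a -> defined inP comp a e -> is_restr inP comp D a e r ->
  nat_le comp D a r.
Proof.
  intros Hrefl Ha Hdef [_ [_ [_ Hmax]]].
  apply Hmax; [exact Ha | apply Hrefl; exact Ha | exact Hdef].
Qed.

Section EDemigroup.

Variable S : Type.
Variable mul : S -> S -> S.
Variable d : S -> S.
Variable E : S -> Prop.

Local Infix "*" := mul.
Local Notation C := (CdE mul d E).
Local Notation le := (nat_le (CdE_comp mul) (@CdE_D S)).
Local Notation defd := (defined C (CdE_comp mul)).
Local Notation restr := (is_restr C (CdE_comp mul) (@CdE_D S)).

Lemma CdE_le_iff (e s f t : S) : le (e, s) (f, t) <-> e * f = e /\ s = e * t.
Proof.
  unfold nat_le, CdE_comp, CdE_D; simpl.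
  split; intros [Hef Hs]; split; try exact Hef.
  - injection Hs as Hs; exact Hs.
  - rewrite <- Hs; reflexivity.
Qed.

Lemma CdE_defined_right (e s f t : S) : defd (e, s) (f, t) -> s * f = s.
Proof. intros [z [_ [H _]]]; exact H. Qed.

Lemma CdE_defined_idem (e s c : S) : C (e, s) -> s * c = s -> defd (e, s) (c, c).
Proof.
  intros HC Hsc. exists (e, s). split; [exact HC|].
  unfold CdE_comp; simpl. rewrite Hsc. split; reflexivity.
Qed.

Hypothesis HED : is_E_demigroup mul d E.

Lemma mulA (x y z : S) : x * (y * z) = (x * y) * z.
Proof. destruct HED as [[Hass _] _]; apply Hass. Qed.

Lemma d_left_id (x : S) : d x * x = x.
Proof. destruct HED as [[_ Hdem] _]; apply (Hdem x x). Qed.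

Lemma d_mul (x y : S) : d (x * y) = d (x * d y).
Proof. destruct HED as [[_ Hdem] _]; apply (Hdem x y). Qed.

Lemma E_idem (e : S) : E e -> e * e = e.
Proof. destruct HED as [_ [HEid _]]; apply HEid. Qed.

Lemma E_d (s : S) : E (d s).
Proof. destruct HED as [_ [_ [HdE _]]]; apply HdE. Qed.

(* d is idempotent as a map: d (d t) = d (d t d t) = d (d t t) = d t. *)
Lemma d_d (t : S) : d (d t) = d t.
Proof.
  destruct HED as [[_ Hdem] _].
  destruct (Hdem t t) as [Hidem _].
  rewrite <- Hidem at 1. rewrite <- d_mul, d_left_id. reflexivity.
Qed.

Lemma CdE_diag (e : S) : E e -> C (e, e).
Proof. intro He. repeat split; [exact He | apply E_idem; exact He]. Qed.

Lemma CdE_domain (t : S) : C (d t, t).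
Proof. repeat split; [apply E_d | apply d_left_id | apply d_d]. Qed.

Lemma CdE_in_DP (e : S) : E e -> in_DP C (@CdE_D S) (e, e).
Proof. intro He. exists (e, e). split; [apply CdE_diag; exact He | reflexivity]. Qed.

Lemma CdE_restr_spec (p q c g u : S) :
  restr (p, q) (c, c) (g, u) -> C (g, u) /\ g * p = g /\ u = g * q /\ u * c = u.
Proof.
  intros [HC [Hle [Hdef _]]].
  apply CdE_le_iff in Hle as [Hgp Hu].
  apply CdE_defined_right in Hdef.
  exact (conj HC (conj Hgp (conj Hu Hdef))).
Qed.

Lemma le_r_partial_order : right_pre_reduced mul E -> partial_order_on E (le_r mul).
Proof.
  intro Hrpr. unfold partial_order_on, le_r. split; [|split].
  - intros e He. symmetry. apply E_idem; exact He.
  - intros e f g _ _ _ Hef Hfg. rewrite Hef at 2. rewrite <- mulA, <- Hfg. exact Hef.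
  - intros e f He Hf Hef Hfe. apply Hrpr; assumption.
Qed.

Hypothesis HIC : inductive_constellation C (CdE_comp mul) (@CdE_D S).

Lemma CdE_refl (x : S * S) : C x -> le x x.
Proof. destruct HIC as [[Hrefl _] _]; apply Hrefl. Qed.

Lemma CdE_restr_exists (p q c : S) : C (p, q) -> E c -> exists w, restr (p, q) (c, c) w.
Proof.
  intros Hpq Hc. destruct HIC as [_ [HO4 _]].
  apply HO4; [apply CdE_in_DP; exact Hc | exact Hpq].
Qed.

Lemma right_pre_reduced_of_inductive : right_pre_reduced mul E.
Proof.
  destruct HIC as [[_ [_ Hanti]] _].
  intros e f He Hf Hef Hfe.
  assert (Hpair : (e, e) = (f, f)).
  { apply Hanti; try (apply CdE_diag; assumption); apply CdE_le_iff; (split; [symmetry|]; assumption). }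
  injection Hpair as Heq; exact Heq.
Qed.

(* With x = (d s, s) we have x o (p,q) = (d s, s q), and
   (O5) says the restriction r of (d s, s q) to c and the restriction u' of x
   to (g,g) have the same first component h.  Since (d s, s q) o (c,c) is
   defined, d s h = d s; since u' o (g,g) is defined, h s g = h s.  Hence
   s g = d s h s g = d s h s = s. *)
Lemma restriction_absorbs (s p q c g u : S) :
  C (p, q) -> s * p = s -> E c -> s * q * c = s * q ->
  restr (p, q) (c, c) (g, u) -> s * g = s.
Proof.
  intros Hpq Hsp Hc Hsqc Hw.
  destruct HIC as [_ [HO4 HO5]].
  pose proof Hpq as [_ [_ Hdpq]]; simpl in Hdpq.
  assert (Hx : C (d s, s)) by apply CdE_domain.
  assert (Hdsq : d (s * q) = d s).
  { rewrite d_mul, <- Hdpq, <- d_mul, Hsp. reflexivity. }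
  assert (Hxy : C (d s, s * q)).
  { repeat split; simpl; [apply E_d | rewrite mulA, d_left_id; reflexivity | rewrite d_d, Hdsq; reflexivity]. }
  assert (Hcomp : CdE_comp mul (d s, s) (p, q) (d s, s * q)) by (split; [exact Hsp | reflexivity]).
  destruct (HO4 (c, c) (d s, s * q) (CdE_in_DP Hc) Hxy) as [[h r2] Hr].
  assert (Hg : in_DP C (@CdE_D S) (g, g)) by (exists (g, u); split; [apply Hw | reflexivity]).
  destruct (HO4 (g, g) (d s, s) Hg Hx) as [[h' u2] Hu].
  assert (Hhh' : (h, h) = (h', h')) by exact (HO5 _ _ _ _ Hx Hpq Hxy Hcomp (CdE_in_DP Hc) _ _ _ Hr Hw Hu).
  injection Hhh' as Hhh'; subst h'.
  assert (Hdsh : d s * h = d s).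
  { apply le_restr_of_defined in Hr as Hle;
      [| exact CdE_refl | exact Hxy | apply CdE_defined_idem; assumption].
    apply CdE_le_iff in Hle as [Hdsh _]; exact Hdsh. }
  apply CdE_restr_spec in Hu as [_ [_ [Hu2 Hu2g]]].
  rewrite Hu2 in Hu2g.
  rewrite <- (d_left_id s) at 1. rewrite <- Hdsh at 1.
  rewrite <- !mulA, (mulA h s g), Hu2g, mulA, Hdsh, d_left_id. reflexivity.
Qed.

Lemma restriction_I1 (t e g u : S) : E e -> restr (d t, t) (e, e) (g, u) ->
  E g /\ forall s, (s * t * e = s * t /\ s * d t = s) <-> s * g = s.
Proof.
  intros He Hw.
  pose proof (CdE_restr_spec Hw) as [[HgE _] [Hgdt [Hu Hue]]].
  rewrite Hu in Hue.
  split; [exact HgE|]. intro s. split.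
  - intros [Hste Hsdt]. exact (restriction_absorbs (CdE_domain t) Hsdt He Hste Hw).
  - intro Hsg. split.
    + rewrite <- Hsg, <- !mulA, (mulA g t e), Hue. reflexivity.
    + rewrite <- Hsg at 1. rewrite <- mulA, Hgdt, Hsg. reflexivity.
Qed.

Definition restr_dot (t e : S) : S :=
  fst (epsilon (inhabits (t, t)) (fun w => restr (d t, t) (e, e) w)).

Lemma restr_dot_I1 : I1 mul d E restr_dot.
Proof.
  intros t e He. unfold restr_dot.
  destruct (CdE_restr_exists (CdE_domain t) He) as [w Hw].
  pose proof (epsilon_spec (inhabits (t, t)) _ (ex_intro _ w Hw)) as Hspec.
  destruct (epsilon _ _) as [g u]. exact (restriction_I1 He Hspec).
Qed.

Lemma restriction_meet (e f g u : S) : E e -> E f -> restr (e, e) (f, f) (g, u) ->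
  is_meet E (le_r mul) e f g.
Proof.
  intros He Hf Hw.
  pose proof (CdE_restr_spec Hw) as [[HgE _] [Hge [Hu Huf]]].
  rewrite Hu, Hge in Huf.
  unfold is_meet, le_r. split; [exact HgE|]. split; [congruence|]. split; [congruence|].
  intros x Hx Hxe Hxf.
  destruct Hw as [_ [_ [_ Hmax]]].
  assert (Hle : le (x, x) (g, u)).
  { apply Hmax; [apply CdE_diag; exact Hx | |].
    - apply CdE_le_iff. split; [symmetry|]; assumption.
    - apply CdE_defined_idem; [apply CdE_diag; exact Hx | congruence]. }
  apply CdE_le_iff in Hle as [Hxg _]. congruence.
Qed.

Lemma I2_of_inductive : I2 mul E.
Proof.
  split.
  - split; [apply le_r_partial_order, right_pre_reduced_of_inductive|].
    intros e f He Hf.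
    destruct (CdE_restr_exists (CdE_diag He) Hf) as [[g u] Hw].
    exists g. exact (restriction_meet He Hf Hw).
  - intros s e f m He Hf [_ [_ [_ Hmmax]]] Hse Hsf.
    destruct (CdE_restr_exists (CdE_diag He) Hf) as [[g u] Hw].
    assert (Hsg : s * g = s).
    { refine (restriction_absorbs (CdE_diag He) Hse Hf _ Hw). rewrite Hse; exact Hsf. }
    pose proof (restriction_meet He Hf Hw) as [HgE [Hge [Hgf _]]].
    assert (Hgm : le_r mul g m) by (apply Hmmax; assumption).
    unfold le_r in Hgm. rewrite <- Hsg at 2. rewrite Hgm, mulA, Hsg. reflexivity.
Qed.

End EDemigroup.

Theorem proposition3p5 (S : Type) (mul : S -> S -> S) (d : S -> S) (E : S -> Prop) :
  is_E_demigroup mul d E ->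
  inductive_constellation (CdE mul d E) (CdE_comp mul) (@CdE_D S) ->
  right_pre_reduced mul E /\
  (exists dot : S -> S -> S, I1 mul d E dot /\ I2 mul E) /\
  inductive_E_demigroup mul d E.
Proof.
  intros HED HIC.
  pose proof (right_pre_reduced_of_inductive HED HIC) as Hrpr.
  assert (Hind : exists dot, I1 mul d E dot /\ I2 mul E).
  { exists (restr_dot mul d E).
    split; [exact (restr_dot_I1 HED HIC) | exact (I2_of_inductive HED HIC)]. }
  split; [exact Hrpr|]. split; [exact Hind|].
  split; [exact HED|]. split; [exact Hrpr | exact Hind].
Qed.
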